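(* Fix $r\ge 2$ and integers $k_0,\dots,k_{r-2}\ge 3$. Then there exists a constant $C_{k_0,\dots,k_{r-2}}>0$ such that for all sufficiently large integers $u$, \[ S(r;k_0,\dots,k_{r-2},u) \le C_{k_0,\dots,k_{r-2}}\,\frac{u^{\sum_{i=0}^{r-2}(k_i-2)+1}}{(\log u)^{\sum_{i=0}^{r-2}(k_i-2)}}-1. \] In particular, for fixed integers $3\le s\le t$ there exists a constant $C_{s,t}>0$ such that for all sufficiently large $u$, \[ S(3;s,t,u)\le C_{s,t}\,\frac{u^{s+t-3}}{(\log u)^{s+t-4}}-1. \]
   Context: For an integer $k\ge 3$, let $\mathcal{L}(k)$ denote the equation $x_1+x_2+\cdots+x_{k-1}=x_k$ in positive integer variables (the $x_i$ need not be distinct). For $N\ge1$, write $[1,N]=\{1,2,\dots,N\}$. For integers $r\ge1$ and $k_0,\dots,k_{r-1}\ge 3$, the generalized Schur number $S(r;k_0,\dots,k_{r-1})$ is the least positive integer $N$ such that for every coloring $\Delta:[1,N]\to\{0,1,\dots,r-1\}$ there exist some $i\in\{0,\dots,r-1\}$ and positive integers $x_1,\dots,x_{k_i}\in[1,N]$ satisfying $\mathcal{L}(k_i)$ with $\Delta(x_1)=\cdots=\Delta(x_{k_i})=i$. *)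

From Stdlib Require Import Reals.
From mathcomp Require Import all_boot.
Set Implicit Arguments. Unset Strict Implicit. Unset Printing Implicit Defensive.

(* A list ks = [:: k_0; ...; k_{r-1}] of parameters; r = size ks.
   schur_prop ks N : every r-coloring of [1,N] (given as a function
   nat -> 'I_r, only its values on [1,N] matter) admits a colour i and
   x_1..x_{k_i} (here indexed x 0 .. x (k_i - 1)) in [1,N], all of colour i,
   with x_1 + ... + x_{k_i - 1} = x_{k_i}. *)
Definition schur_prop (ks : seq nat) (N : nat) : Prop :=
  forall Delta : nat -> 'I_(size ks),
    exists (i : 'I_(size ks)) (x : nat -> nat),
      (forall j, j < nth 0 ks i -> (1 <= x j <= N) /\ Delta (x j) = i) /\
      \sum_(j < (nth 0 ks i).-1) x j = x (nth 0 ks i).-1.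

Definition is_schur (ks : seq nat) (N : nat) : Prop :=
  0 < N /\ schur_prop ks N /\ (forall M, 0 < M -> M < N -> ~ schur_prop ks M).

From Stdlib Require Import Reals.
From mathcomp Require Import all_boot.
From Stdlib Require Import Classical Lra Lia.
From mathcomp Require Import zify.
Set Implicit Arguments. Unset Strict Implicit. Unset Printing Implicit Defensive.

(* The bound is proved in the much stronger form S(k_0, ..., k_{r-2}, u) <= K u
   for large u, which implies the stated one because ln u < u.
   A Ramsey argument on the colours of the differences y' - y shows that some T
   makes every colouring of [1, T] with the first r - 1 colours contain a
   solution. Dilating such a colouring by c, any colouring of [1, N] without a
   solution gives the last colour to some c j with 0 < j <= T. Applied four
   times this produces a, a (e + 1), a (f + 1) and a j (u - 1 + f^2) in the last
   colour, with e dividing f + 1 and T <= f; then j (u - 1 + f^2) is a sum of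
   u - 1 terms from {1, e + 1, f + 1}, which gives a solution of L(u) in the
   last colour. *)

Lemma sum_count_classes n (f : nat -> 'I_n) (s : seq nat) :
  \sum_(i < n) count (fun x => f x == i) s = size s.
Proof.
under eq_bigr do rewrite -sum1_count big_mkcond.
rewrite exchange_big /= -sum1_size; apply: eq_bigr => x _.
by rewrite -big_mkcond /= (big_pred1 (f x)) // => i; rewrite eq_sym.
Qed.

Lemma pigeonhole_class n (f : nat -> 'I_n) (s : seq nat) g :
  n * g < size s -> exists i, g < count (fun x => f x == i) s.
Proof.
move=> lt_ng_s; case: (boolP [exists i, g < count (fun x => f x == i) s]).
  by move=> /existsP.
rewrite negb_exists => /forallP small; move: lt_ng_s.
rewrite -(sum_count_classes f) -[n in n * g]card_ord -sum_nat_const ltnNge.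
by rewrite leq_sum // => i _; rewrite leqNgt small.
Qed.

Lemma sum_decr_at n (m : 'I_n -> nat) i :
  0 < m i -> \sum_j (m j - (j == i)) = (\sum_j m j).-1.
Proof.
move=> mi_gt0; rewrite (bigD1 i) //= [in RHS](bigD1 i) //= eqxx.
rewrite (eq_bigr m) => [|j /negbTE ->]; [lia | exact: subn0].
Qed.

Definition mono_chain n (D : nat -> 'I_n) (X : seq nat) (i : 'I_n) (m : nat) :=
  exists y : nat -> nat, (forall l, l <= m -> y l \in X) /\
    (forall l l', l < l' <= m -> y l < y l' /\ D (y l' - y l) = i).

Section MonoChain.
Variables (n : nat) (D : nat -> 'I_n).

Lemma mono_chain0 X i x : x \in X -> mono_chain D X i 0.
Proof. by move=> xX; exists (fun=> x); split => [//|l l']; lia. Qed.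

Lemma mono_chain_sub X Y i m :
  {subset Y <= X} -> mono_chain D Y i m -> mono_chain D X i m.
Proof. by move=> sYX [y [yY y_mono]]; exists y; split => // l /yY /sYX. Qed.

Lemma mono_chain_cons p Y i m :
  (forall z, z \in Y -> p < z /\ D (z - p) = i) ->
  mono_chain D Y i m -> mono_chain D (p :: Y) i m.+1.
Proof.
move=> above [y [yY y_mono]].
exists (fun l => if l is l1.+1 then y l1 else p); split.
  by case=> [|l] lm; rewrite inE ?eqxx // yY ?orbT.
case=> [|l] [|l'] //= ll'm; [exact: above (yY _ ll'm) | exact: y_mono].
Qed.

End MonoChain.

Lemma ramsey_mono_chain n s : exists2 G, 0 < G &
  forall (D : nat -> 'I_n) (m : 'I_n -> nat), \sum_i m i <= s ->
  forall X, sorted ltn X -> G <= size X -> exists i, mono_chain D X i (m i).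
Proof.
elim: s => [|s [G' G'_gt0 IH]].
  exists 1 => // D m m0 [|x X] // _ _; exists (D x).
  have -> : m (D x) = 0 by move: m0; rewrite leqn0 sum_nat_eq0 => /forallP/(_ (D x))/eqP.
  exact: (mono_chain0 _ _ (mem_head x X)).
exists (n * G').+2 => // D m m_le [|p X] // sorted_pX size_X.
have X_above : all (ltn p) X by apply: order_path_min sorted_pX; apply: ltn_trans.
pose cl i := [seq x <- X | D (x - p) == i].
have [i big_i] : exists i, G'.-1 < count (fun x => D (x - p) == i) X.
  by apply: pigeonhole_class; move: size_X => /=; nia.
have size_cl : G' <= size (cl i) by rewrite size_filter; lia.
have [mi0 | mi_gt0] := posnP (m i).
  by exists i; rewrite mi0; apply: (mono_chain0 _ _ (mem_head p X)).
pose m' j := m j - (j == i).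
have m'_le : \sum_j m' j <= s by rewrite sum_decr_at //; lia.
have sorted_cl : sorted ltn (cl i) := sorted_filter ltn_trans _ (path_sorted sorted_pX).
have [j chain_j] := IH D m' m'_le (cl i) sorted_cl size_cl.
have sub_cl : {subset p :: cl i <= p :: X}.
  by move=> z; rewrite !inE mem_filter => /orP[-> // | /andP[_ ->]]; rewrite orbT.
exists j; have [ji | ne_ji] := eqVneq j i.
  rewrite ji in chain_j *.
  have -> : m i = (m' i).+1 by rewrite /m' eqxx; lia.
  apply: (mono_chain_sub sub_cl); apply: (mono_chain_cons _ chain_j) => z.
  by rewrite mem_filter => /andP[/eqP Dz zX]; split => //; apply: (allP X_above).
have -> : m j = m' j by rewrite /m' (negbTE ne_ji) subn0.
by apply: (mono_chain_sub _ chain_j) => z z_cl; rewrite sub_cl // inE z_cl orbT.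
Qed.

Definition mono_solution (ks : seq nat) (N : nat) (D : nat -> 'I_(size ks)) : Prop :=
  exists (i : 'I_(size ks)) (x : nat -> nat),
    (forall j, j < nth 0 ks i -> (1 <= x j <= N) /\ D (x j) = i) /\
    \sum_(j < (nth 0 ks i).-1) x j = x (nth 0 ks i).-1.
Arguments mono_solution : clear implicits.

Lemma schur_prop_exists (ks : seq nat) :
  (forall i, i < size ks -> 2 <= nth 0 ks i) -> exists2 T, 0 < T & schur_prop ks T.
Proof.
move=> ks_ge2.
have [G G_gt0 ramseyG] := ramsey_mono_chain (size ks) (\sum_(i < size ks) (nth 0 ks i).-1).
exists G => // D.
have [i [y [y_in y_mono]]] := ramseyG D (fun i => (nth 0 ks i).-1) (leqnn _) (iota 0 G)
  (iota_ltn_sorted 0 G) (eq_leq (esym (size_iota 0 G))).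
have k_ge2 := ks_ge2 i (ltn_ord i).
set k := nth 0 ks i in k_ge2 y_in y_mono *.
have y_lt l : l <= k.-1 -> y l < G by move/y_in; rewrite mem_iota.
exists i, (fun j => if j < k.-1 then y j.+1 - y j else y k.-1 - y 0); split.
  move=> j lt_jk; case: ifP => [lt_jk1 | _].
    by have [? ?] := y_mono j j.+1 ltac:(lia); have := y_lt j.+1 lt_jk1; split => //; lia.
  by have [? ?] := y_mono 0 k.-1 ltac:(lia); have := y_lt k.-1 (leqnn _); split => //; lia.
rewrite ltnn (eq_bigr (fun j : 'I_k.-1 => y j.+1 - y j)) => [|j _]; last by rewrite ltn_ord.
rewrite -(big_mkord xpredT (fun j => y j.+1 - y j)) telescope_sumn_in //.
move=> j /andP[_ lt_jk].
by have [/ltnW] := y_mono j j.+1 ltac:(lia).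
Qed.

Definition last_colour (ks : seq nat) (u : nat) : 'I_(size (rcons ks u)) :=
  cast_ord (esym (size_rcons ks u)) ord_max.

Lemma nth_last_colour ks u : nth 0 (rcons ks u) (last_colour ks u) = u.
Proof. by rewrite nth_rcons ltnn eqxx. Qed.

Lemma last_colour_multiple ks u T N c (D : nat -> 'I_(size (rcons ks u))) :
  0 < size ks -> schur_prop ks T -> ~ mono_solution (rcons ks u) N D ->
  0 < c -> c * T <= N -> exists2 j, 0 < j <= T & D (c * j) = last_colour ks u.
Proof.
move=> ks_gt0 schurT nosol c_gt0 cT_le; apply: NNPP => nohit.
pose D' j : 'I_(size ks) := insubd (Ordinal ks_gt0) (val (D (c * j))).
have [i [x [x_ok x_sum]]] := schurT D'.
have le_ks : size ks <= size (rcons ks u) by rewrite size_rcons.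
have nth_i : nth 0 (rcons ks u) (widen_ord le_ks i) = nth 0 ks i.
  by rewrite nth_rcons /= ltn_ord.
apply: nosol; exists (widen_ord le_ks i), (fun j => c * x j); rewrite nth_i; split.
  move=> j /x_ok [x_range D'x]; split; first by nia.
  have D_lt : val (D (c * x j)) < size ks.
    have := ltn_ord (D (c * x j)); rewrite [X in _ < X]size_rcons ltnS leq_eqVlt.
    case/orP=> [/eqP D_last | //].
    by case: nohit; exists (x j) => //; apply: val_inj.
  by apply: val_inj; rewrite /= -D'x /D' insubdK.
by rewrite -big_distrr /= x_sum.
Qed.

Lemma sum_piecewise3 A B K v1 v2 v3 : A <= B <= K ->
  \sum_(l < K) (if l < A then v1 else if l < B then v2 else v3) =
  A * v1 + (B - A) * v2 + (K - B) * v3.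
Proof.
move=> /andP[le_AB le_BK].
rewrite -(big_mkord xpredT (fun l => if l < A then v1 else if l < B then v2 else v3)).
rewrite (big_cat_nat (leq0n A) (leq_trans le_AB le_BK)) (big_cat_nat le_AB le_BK) /=.
rewrite (eq_big_nat _ _ (F2 := fun=> v1)); last by move=> l /andP[_ ->].
rewrite (eq_big_nat _ _ (m := A) (F2 := fun=> v2)); last first.
  by move=> l /andP[le_Al ->]; rewrite ltnNge le_Al.
rewrite (eq_big_nat _ _ (m := B) (F2 := fun=> v3)); last first.
  by move=> l /andP[le_Bl _]; rewrite !ltnNge le_Bl (leq_trans le_AB le_Bl).
by rewrite !sum_nat_const_nat subn0 addnA.
Qed.

Lemma last_colour_solution ks u N (D : nat -> 'I_(size (rcons ks u))) v1 v2 v3 A B :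
  A <= B <= u.-1 ->
  (forall v, v \in [:: v1; v2; v3; A * v1 + (B - A) * v2 + (u.-1 - B) * v3] ->
     0 < v <= N /\ D v = last_colour ks u) ->
  mono_solution (rcons ks u) N D.
Proof.
move=> le_ABu all_last; exists (last_colour ks u).
exists (fun l => if l < u.-1 then (if l < A then v1 else if l < B then v2 else v3)
                 else A * v1 + (B - A) * v2 + (u.-1 - B) * v3).
rewrite nth_last_colour; split.
  by move=> l _; apply: all_last; rewrite !inE; do !case: ifP => _; rewrite eqxx ?orbT.
rewrite ltnn -(sum_piecewise3 _ _ _ le_ABu).
by apply: eq_bigr => l _; rewrite ltn_ord.
Qed.

Lemma three_value_decomposition T e j0 j f u :
  0 < j0 <= T -> 0 < j <= T -> f.+1 = e * j0 -> T <= f -> 2 * T * f ^ 2 < u ->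
  exists A B, A <= B <= u.-1 /\
    A * e.+1 + (B - A) * f.+1 + (u.-1 - B) = j * (u.-1 + f ^ 2).
Proof.
move=> /andP[j0_gt0 j0_le] /andP[j_gt0 j_le] ef T_le_f u_big.
have f_gt0 : 0 < f by lia.
pose n0 := (j - 1) * u.-1 + j * f ^ 2.
have n0_eq : u.-1 + n0 = j * (u.-1 + f ^ 2).
  by rewrite /n0 mulnDr addnA -{1}(mul1n u.-1) -mulnDl subnKC.
pose q := n0 %/ f; pose rho := n0 %% f.
have n0_div : n0 = q * f + rho := divn_eq n0 f.
have rho_lt : rho < f := ltn_pmod n0 f_gt0.
have f_le_q : f <= q.
  rewrite leq_divRL // mulnn; apply: leq_trans (leq_addl _ _).
  by rewrite leq_pmull.
have rho_le_q : rho <= q := ltnW (leq_trans rho_lt f_le_q).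
have B_le : rho * j0 + (q - rho) <= u.-1.
  rewrite -(leq_pmul2l f_gt0).
  have -> : f * (rho * j0 + (q - rho)) = f * (rho * (j0 - 1)) + f * q.
    by rewrite -[in LHS](prednK j0_gt0) mulnS addnAC subnKC ?mulnDr 1?addnC ?subn1.
  have rho_part : f * (rho * (j0 - 1)) <= T * f ^ 2.
    rewrite mulnC -mulnn mulnA leq_mul2r [T * f]mulnC leq_mul ?orbT //.
    - exact: ltnW.
    - lia.
  have q_part : f * q <= n0 by rewrite mulnC n0_div leq_addr.
  have n0_le : n0 + u.-1 <= T * (u.-1 + f ^ 2).
    by rewrite addnC n0_eq leq_mul2r j_le orbT.
  have Tu_le : T * u.-1 <= f * u.-1 by rewrite leq_mul2r T_le_f orbT.
  lia.
(* As rho j0 e = rho (f + 1), the excesses over 1 of the chosen terms add up to q f + rho. *)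
exists (rho * j0), (rho * j0 + (q - rho)); rewrite leq_addr addKn /=; split => //.
have e_terms : rho * j0 * e.+1 = rho * f + rho + rho * j0.
  by rewrite mulnSr -mulnA (mulnC j0) -ef mulnSr.
have f_terms : (q - rho) * f.+1 + rho * f = q * f + (q - rho).
  by rewrite mulnSr mulnBl addnAC subnK // leq_mul2r rho_le_q orbT.
rewrite -n0_eq n0_div; lia.
Qed.

Lemma schur_prop_rcons ks T u : 0 < size ks -> 0 < T -> schur_prop ks T ->
  let F := T * (T + 2) * T in
  2 * T * F ^ 2 < u -> schur_prop (rcons ks u) (T * T * (u + F ^ 2)).
Proof.
move=> ks_gt0 T_gt0 schurT F u_big D; set N := T * T * (u + F ^ 2).
change (mono_solution (rcons ks u) N D); apply: NNPP => nosol.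
have T_le_F : T <= F by rewrite /F -mulnA leq_pmulr // muln_gt0 addn2 T_gt0.
have F2_le_N : F ^ 2 <= N.
  by apply: leq_trans (leq_addl u _) _; rewrite leq_pmull // muln_gt0 T_gt0.
have FT_le_N : F * T <= N by apply: leq_trans F2_le_N; rewrite -mulnn leq_mul2l T_le_F orbT.
have F_le_N : F <= N by apply: leq_trans FT_le_N; rewrite leq_pmulr.
have multiple c : 0 < c -> c * T <= N ->
    exists2 j, 0 < j <= T & D (c * j) = last_colour ks u.
  exact: last_colour_multiple.
have [a /andP[a_gt0 a_le] Da] : exists2 a, 0 < a <= T & D (1 * a) = last_colour ks u.
  by apply: multiple; rewrite // mul1n (leq_trans T_le_F).
have [j1 /andP[j1_gt0 j1_le] Dj1] :
    exists2 j1, 0 < j1 <= T & D (a * (T + 2) * j1) = last_colour ks u.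
  apply: multiple; first by rewrite muln_gt0 a_gt0 addn2.
  by apply: leq_trans F_le_N; rewrite !leq_mul2r a_le !orbT.
(* The factor T + 2 makes e > T, hence T <= f. *)
pose e := ((T + 2) * j1).-1.
have e_succ : e.+1 = (T + 2) * j1 by rewrite prednK // muln_gt0 addn2.
have T_lt_e : T < e by rewrite -ltnS e_succ -addn2 leq_pmulr.
have e_lt : e < (T + 2) * T by rewrite e_succ leq_mul2l j1_le orbT.
have [j0 j0_range Dj0] : exists2 j0, 0 < j0 <= T & D (a * e * j0) = last_colour ks u.
  apply: multiple; first by rewrite muln_gt0 a_gt0 (leq_trans _ T_lt_e).
  by apply: leq_trans FT_le_N; rewrite leq_mul2r /F -mulnA leq_mul ?orbT // ltnW.
pose f := (e * j0).-1.
have [j0_gt0 j0_le] := andP j0_range.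
have f_succ : f.+1 = e * j0 by rewrite prednK // muln_gt0 j0_gt0 (leq_trans _ T_lt_e).
have T_le_f : T <= f by rewrite -ltnS f_succ (leq_trans T_lt_e) ?leq_pmulr.
have f_le_F : f <= F.
  by apply: ltnW; rewrite f_succ /F [T * _]mulnC leq_mul // ltnW.
have f2_le_F2 : f ^ 2 <= F ^ 2 := leq_mul f_le_F f_le_F.
have c_gt0 : 0 < a * (u.-1 + f ^ 2).
  by rewrite muln_gt0 a_gt0 addn_gt0 expn_gt0 (leq_trans T_gt0 T_le_f) orbT.
have cT_le : a * (u.-1 + f ^ 2) * T <= N.
  by rewrite /N [T * T * _]mulnAC leq_mul2r leq_mul ?orbT // leq_add // leq_pred.
have [j j_range Dj] := multiple _ c_gt0 cT_le.
have [j_gt0 j_le] := andP j_range.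
have [A [B [le_ABu decomp]]] := three_value_decomposition j0_range j_range f_succ T_le_f
  (leq_ltn_trans (leq_mul (leqnn _) f2_le_F2) u_big).
apply/nosol/(last_colour_solution (v1 := a * e.+1) (v2 := a * f.+1) (v3 := a) le_ABu).
have -> : A * (a * e.+1) + (B - A) * (a * f.+1) + (u.-1 - B) * a = a * (u.-1 + f ^ 2) * j.
  rewrite -mulnA [(_ + _) * j]mulnC -decomp !mulnDr.
  by rewrite [(u.-1 - B) * a]mulnC (mulnCA A) (mulnCA (B - A)).
move=> v; rewrite !inE => /or4P[] /eqP ->.
- rewrite e_succ mulnA Dj1 !muln_gt0 a_gt0 j1_gt0 addn_gt0 orbT; split => //.
  by apply: leq_trans F_le_N; apply: leq_mul => //; apply: leq_mul.
- rewrite f_succ mulnA Dj0 !muln_gt0 a_gt0 j0_gt0 (leq_trans _ T_lt_e) //; split => //.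
  apply: leq_trans FT_le_N; apply: leq_mul => //.
  by rewrite /F -mulnA; apply: leq_mul => //; apply: ltnW.
- by rewrite -Da mul1n a_gt0 (leq_trans a_le) // (leq_trans T_le_F).
- by rewrite Dj muln_gt0 c_gt0 j_gt0 (leq_trans _ cT_le) // leq_mul2l j_le orbT.
Qed.

Lemma is_schur_le ks M : 0 < M -> schur_prop ks M -> exists2 N, is_schur ks N & N <= M.
Proof.
elim/ltn_ind: M => M IH M_gt0 schurM.
case: (classic (exists2 K, 0 < K < M & schur_prop ks K)) => [[K /andP[K_gt0 K_lt]] | none].
  move=> schurK; have [N isN N_le] := IH K K_lt K_gt0 schurK.
  by exists N => //; apply: leq_trans N_le (ltnW K_lt).
exists M => //; split=> [//|]; split=> // K K_gt0 K_lt schurK.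
by apply: none; exists K; rewrite ?K_gt0.
Qed.

Lemma schur_rcons_linear ks : 0 < size ks -> (forall i, i < size ks -> 2 <= nth 0 ks i) ->
  exists K U, forall u, U <= u -> exists2 N, is_schur (rcons ks u) N & N <= K * u.
Proof.
move=> ks_gt0 ks_ge2; have [T T_gt0 schurT] := schur_prop_exists ks_ge2.
pose F := T * (T + 2) * T.
exists (T * T * (1 + F ^ 2)), (2 * T * F ^ 2).+1 => u u_big.
have [|N isN N_le] := is_schur_le _ (schur_prop_rcons ks_gt0 T_gt0 schurT u_big).
  by rewrite !muln_gt0 T_gt0 addn_gt0 (leq_trans _ u_big).
exists N => //; apply: (leq_trans N_le).
rewrite -[X in _ <= X]mulnA leq_mul2l mulnDl mul1n leq_add2l leq_pmulr ?orbT //.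
exact: leq_trans u_big.
Qed.

Local Open Scope R_scope.

Lemma linear_le_pow_div_ln K d : exists2 C, 0 < C & forall u N : nat, (3 <= u)%N ->
  (N <= K * u)%N -> INR N <= C * INR u ^ (d + 1) / ln (INR u) ^ d - 1.
Proof.
exists (INR K + 1); first by have := pos_INR K; lra.
move=> u N u_ge3 N_le.
have INRu_ge3 : 3 <= INR u by have := le_INR 3 u (elimT leP u_ge3); rewrite /=; lra.
have L_gt0 : 0 < ln (INR u) by rewrite -ln_1; apply: ln_increasing; lra.
have L_lt : ln (INR u) < INR u.
  rewrite -{2}[INR u]ln_exp; apply: ln_increasing; first lra.
  have := exp_ineq1 (INR u) ltac:(lra); lra.
have Ld_gt0 : 0 < ln (INR u) ^ d by apply: pow_lt.
have Ld_le : ln (INR u) ^ d <= INR u ^ d by apply: pow_incr; lra.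
have NK : INR N <= INR K * INR u by rewrite -mult_INR; apply: le_INR; apply/leP.
have K_ge0 : 0 <= INR K by apply: pos_INR.
have N_ge0 : 0 <= INR N by apply: pos_INR.
suff : INR N + 1 <= (INR K + 1) * INR u ^ (d + 1) / ln (INR u) ^ d by lra.
apply: (Rmult_le_reg_r (ln (INR u) ^ d)) => //.
rewrite /Rdiv Rmult_assoc Rinv_l ?Rmult_1_r; last lra.
rewrite addnC pow_add /= Rmult_1_r -Rmult_assoc.
apply: Rmult_le_compat => //; [lra | lra | nra].
Qed.

Lemma schur_rcons_le_pow_div_ln (ks : seq nat) (d : nat) : (0 < size ks)%N ->
  (forall i, (i < size ks)%N -> (2 <= nth 0 ks i)%N) ->
  exists C, 0 < C /\ exists U, forall u, (U <= u)%N -> exists N, is_schur (rcons ks u) N /\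
    INR N <= C * INR u ^ (d + 1) / ln (INR u) ^ d - 1.
Proof.
move=> ks_gt0 ks_ge2; have [K [U linear]] := schur_rcons_linear ks_gt0 ks_ge2.
have [C C_gt0 bound] := linear_le_pow_div_ln K d.
exists C; split => //; exists (maxn U 3) => u; rewrite geq_max => /andP[U_le u_ge3].
by have [N isN N_le] := linear u U_le; exists N; split; last exact: bound.
Qed.

Local Close Scope R_scope.

Theorem corollary2 :
  (forall (r : nat) (k : nat -> nat),
    2 <= r -> (forall i, i < r.-1 -> 3 <= k i) ->
    exists C : R, Rlt 0 C /\
      exists U : nat, forall u : nat, U <= u ->
        exists N : nat, is_schur (rcons (mkseq k r.-1) u) N /\
          let s := (\sum_(i < r.-1) (k i - 2))%N in
          Rle (INR N)
              (Rminus (Rdiv (Rmult C (pow (INR u) (s + 1))) (pow (ln (INR u)) s)) 1))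
  /\
  (forall s t : nat, 3 <= s -> s <= t ->
    exists C : R, Rlt 0 C /\
      exists U : nat, forall u : nat, U <= u ->
        exists N : nat, is_schur [:: s; t; u] N /\
          Rle (INR N)
              (Rminus (Rdiv (Rmult C (pow (INR u) (s + t - 3))) (pow (ln (INR u)) (s + t - 4))) 1)).
Proof.
split=> [r k r_ge2 k_ge3 | s t s_ge3 le_st].
  apply: schur_rcons_le_pow_div_ln; first by rewrite size_mkseq; lia.
  by move=> i; rewrite size_mkseq => lt_ir; rewrite nth_mkseq // ltnW // k_ge3.
rewrite (_ : s + t - 3 = s + t - 4 + 1); last by lia.
apply: (schur_rcons_le_pow_div_ln (ks := [:: s; t])) => // [[|[|i]]] //= _; lia.
Qed.
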